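(* Let $\emptyset\neq\mathcal T\subset\binom{[n]}{3}$ be an intersecting family. Then either $\mathcal T$ is isomorphic to $\mathcal L$ or to $\mathcal T_0$, or there exist $T\in\mathcal T$ and $S\subset T$ with $|S|=2$ and $|\mathcal T(\overline S)|\leq 1$.
   Context: A family is intersecting if any two members intersect. For $S\subset[n]$, $\mathcal T(\overline S)=\{T\in\mathcal T: T\cap S=\emptyset\}$. $\mathcal L$ is the Fano plane: $\{1,2,3\},\{1,4,5\},\{1,6,7\},\{2,4,6\},\{2,5,7\},\{3,5,6\},\{3,4,7\}$. $\mathcal T_0\subset\binom{[6]}{3}$ is $\{\{1,2,3\},\{1,2,4\},\{3,4,5\},\{3,4,6\},\{1,5,6\},\{2,5,6\},\{1,3,5\},\{2,4,5\},\{1,4,6\},\{2,3,6\}\}$. Isomorphic means equal up to an injective relabeling of vertices. *)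

From mathcomp Require Import all_boot.
Set Implicit Arguments. Unset Strict Implicit. Unset Printing Implicit Defensive.

(* Vertices of [m] = {1,...,m} are represented by 'I_m = {0,...,m-1}:
   paper vertex i corresponds to ordinal i-1; tri m a b c is the triple
   {a,b,c} of [m+1]. *)
Definition tri (m a b c : nat) : {set 'I_m.+1} :=
  [set (inord a.-1 : 'I_m.+1); inord b.-1; inord c.-1].

Definition fano : {set {set 'I_7}} :=
  [set tri 6 1 2 3; tri 6 1 4 5; tri 6 1 6 7; tri 6 2 4 6;
       tri 6 2 5 7; tri 6 3 5 6; tri 6 3 4 7].

Definition T0 : {set {set 'I_6}} :=
  [set tri 5 1 2 3; tri 5 1 2 4; tri 5 3 4 5; tri 5 3 4 6; tri 5 1 5 6;
       tri 5 2 5 6; tri 5 1 3 5; tri 5 2 4 5; tri 5 1 4 6; tri 5 2 3 6].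

Definition intersecting (T : finType) (F : {set {set T}}) : Prop :=
  forall A B, A \in F -> B \in F -> A :&: B != set0.

Definition fam_image (T U : finType) (f : T -> U) (F : {set {set T}})
  : {set {set U}} := [set f @: (A : {set T}) | A in F].

Definition fam_iso (T U : finType) (F : {set {set U}}) (G : {set {set T}})
  : Prop := exists f : T -> U, injective f /\ F = fam_image f G.

(* T(\bar S) = members of F disjoint from S. *)
Definition avoid (T : finType) (F : {set {set T}}) (S : {set T})
  : {set {set T}} := [set A in F | [disjoint A & S]].

From mathcomp Require Import all_boot.
From Stdlib Require Import Classical.
Set Implicit Arguments. Unset Strict Implicit. Unset Printing Implicit Defensive.

(* Suppose every pair S inside an edge is avoided by at least two edges.  For
   an edge {x,y,z}, the edges avoiding {y,z} must meet {x,y,z} in x, so there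
   are two distinct edges through x avoiding y and z.  Call x linked in
   {x,y,z} when any two such edges share a second vertex.
   - If x = a is not linked in some edge {a,b,c}, we get edges {a,p,q} and
     {a,r,s} with p,q,r,s distinct; the two edges through b (and through c)
     avoiding the rest of {a,b,c} are forced to be transversals of
     {p,q} x {r,s}, and intersecting plus the avoidance condition leaves only
     the seven lines of the Fano plane.
   - If every vertex of {a,b,c} is linked, the edges through a avoiding b, c
     are {a,p,q} and {a,p,r}; chasing the edges through b and c produces ten
     edges forming a copy of T0.
   In both cases the explicit edges already pin down F: every other triple
   misses one of them. *)

Section Triples.
Variable T : finType.
Implicit Types x y z u v p q r : T.

Lemma in_set3P w x y z : reflect (w = x \/ w = y \/ w = z) (w \in [set x; y; z]).
Proof.
rewrite !inE -orbA; apply: (iffP or3P).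
- by case=> /eqP ->; auto.
- by case=> [->|[->|->]]; rewrite eqxx; [apply: Or31|apply: Or32|apply: Or33].
Qed.

Lemma notin_set3 w x y z : w \notin [set x; y; z] -> w <> x /\ w <> y /\ w <> z.
Proof. by move=> wN; split; [|split] => E; apply: (negP wN); apply/in_set3P; auto. Qed.

Lemma card_set3_neq x y z : #|[set x; y; z]| = 3 -> x <> y /\ x <> z /\ y <> z.
Proof.
rewrite -setUA cardsU1 cards2 !inE negb_or.
by case: (x =P y); case: (x =P z); case: (y =P z).
Qed.

Lemma card3_set3 (E : {set T}) x : #|E| = 3 -> x \in E -> exists u v, E = [set x; u; v].
Proof.
move=> E3 xE; have : #|E :\ x| == 2 by rewrite (cardsD1 x E) xE add1n in E3; case: E3 => ->.
case/cards2P => u [v [_ Ex]]; exists u, v.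
by apply/setP => w; rewrite -{1}(setD1K xE) Ex !inE orbA.
Qed.

Lemma set3C12 x y z : [set x; y; z] = [set y; x; z].
Proof. by apply/setP => w; rewrite !inE; case: (w == x); case: (w == y). Qed.

Lemma set3C23 x y z : [set x; y; z] = [set x; z; y].
Proof. by apply/setP => w; rewrite !inE; case: (w == y); case: (w == z); case: (w == x). Qed.

Lemma set3C13 x y z : [set x; y; z] = [set z; y; x].
Proof. by apply/setP => w; rewrite !inE; case: (w == y); case: (w == z); case: (w == x). Qed.

Lemma set3_eq_mem x u v p s : [set x; u; v] = [set x; p; s] -> s = x \/ s = u \/ s = v.
Proof. by move=> e; apply/in_set3P; rewrite e; apply/in_set3P; auto. Qed.

Lemma nth_ord_inj (s : seq T) x0 k : size s = k -> uniq s ->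
  injective (fun i : 'I_k => nth x0 s i).
Proof. by move=> sk s_uniq i j /eqP; rewrite nth_uniq ?sk // => /eqP; apply: val_inj. Qed.

End Triples.

Ltac trivial_disj P := match P with
  | ?x = ?x => idtac
  | ?A \/ ?B => first [trivial_disj A | trivial_disj B] end.

Ltac subst_eqs := repeat match goal with
  | H : _ /\ _ |- _ => destruct H
  | H : ?x = ?x |- _ => clear H
  | H : ?x <> ?x |- _ => exfalso; exact (H erefl)
  | H : ?P |- _ => trivial_disj P; clear H
  | H : ?x = ?y |- _ => first [subst x | subst y]
  end.

Ltac cases_then tac := subst_eqs; lazymatch goal with
  | H : _ \/ _ |- _ => destruct H as [H|H]; cases_then tac
  | _ => tac end.

Ltac case_eq_among u names := lazymatch names with
  | (?x, ?rest) => case: (u =P x) => ?; [subst u | case_eq_among u rest]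
  | tt => idtac end.

Ltac perm_set3 := match goal with
 | |- is_true ([set ?x;?y;?z] == [set ?x;?y;?z]) => idtac
 | |- is_true ([set ?x;?y;?z] == [set ?x;?z;?y]) => idtac
 | |- is_true ([set ?x;?y;?z] == [set ?y;?x;?z]) => idtac
 | |- is_true ([set ?x;?y;?z] == [set ?y;?z;?x]) => idtac
 | |- is_true ([set ?x;?y;?z] == [set ?z;?x;?y]) => idtac
 | |- is_true ([set ?x;?y;?z] == [set ?z;?y;?x]) => idtac
 end; apply/eqP/setP => ?; rewrite !inE; by do ![case: (_ == _)].

Ltac mem_set3_list := first [ perm_set3 | apply/orP; first [right; perm_set3 | left; mem_set3_list] ].

Ltac contra_set3_neq := idtac; match goal with H : [set _; _; _] <> [set _; _; _] |- _ =>
  exfalso; apply: H; apply/eqP; perm_set3 end.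

Ltac rewrite_neqs := repeat match goal with
 | H : _ /\ _ |- _ => destruct H
 | H : ?x <> ?y |- _ => rewrite ?(introF eqP H) ?(introF eqP (not_eq_sym H)); clear H end.

Ltac solve_neq := solve [ assumption | let E := fresh in intro E; subst; tauto ].

Lemma pair_meeting_three_pairs (T : finType) (x u v p q r : T) :
  u <> v -> p <> q -> p <> r -> q <> r ->
  u = p \/ u = q \/ v = p \/ v = q -> u = p \/ u = r \/ v = p \/ v = r ->
  u = q \/ u = r \/ v = q \/ v = r ->
  exists i j, [set x; u; v] = [set x; i; j] /\
              ((i = p /\ j = q) \/ (i = p /\ j = r) \/ (i = q /\ j = r)).
Proof.
move=> *; cases_then ltac:(first [ (exists p, q; split; [apply/eqP; perm_set3 | tauto])
  | (exists p, r; split; [apply/eqP; perm_set3 | tauto])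
  | (exists q, r; split; [apply/eqP; perm_set3 | tauto]) ]).
Qed.

Section Family.
Variable T : finType.
Variable F : {set {set T}}.
Hypothesis F3 : forall A, A \in F -> #|A| = 3.
Hypothesis Fint : intersecting F.
Hypothesis Favoid : forall A S : {set T}, A \in F -> S \subset A -> #|S| = 2 -> 1 < #|avoid F S|.
Implicit Types x y z w u v : T.

Ltac set3_in_F := first [ assumption | rewrite set3C23; assumption
  | rewrite set3C12; first [assumption | rewrite set3C23; assumption]
  | rewrite set3C13; first [assumption | rewrite set3C23; assumption] ].

Lemma set3_neq x y z : [set x; y; z] \in F -> x <> y /\ x <> z /\ y <> z.
Proof. by move/F3/card_set3_neq. Qed.

Lemma meet_set3 x1 x2 x3 y1 y2 y3 : [set x1; x2; x3] \in F -> [set y1; y2; y3] \in F ->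
  x1 = y1 \/ x1 = y2 \/ x1 = y3 \/ x2 = y1 \/ x2 = y2 \/ x2 = y3 \/
  x3 = y1 \/ x3 = y2 \/ x3 = y3.
Proof.
move=> XF YF; have /set0Pn [w] := Fint XF YF.
rewrite inE => /andP [/in_set3P wX /in_set3P wY].
by case: wX => [E|[E|E]]; subst w; tauto.
Qed.

Lemma meet_tail x u v y p q : [set x; u; v] \in F -> [set y; p; q] \in F ->
  x <> y -> x <> p -> x <> q -> u <> y -> v <> y -> u = p \/ u = q \/ v = p \/ v = q.
Proof.
move=> XF YF *; have := meet_set3 XF YF; cases_then ltac:(intuition).
Qed.

Lemma edge_through E x y z : E \in F -> [set x; y; z] \in F -> exists w u v,
  E = [set w; u; v] /\ (w = x \/ w = y \/ w = z).
Proof.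
move=> EF AF; have /set0Pn [w] := Fint EF AF; rewrite inE => /andP [wE /in_set3P wA].
have [u [v Ee]] := card3_set3 (F3 EF) wE; by exists w, u, v.
Qed.

Lemma fano_of_edges a b c p q r s :
  [set a; b; c] \in F -> [set a; p; q] \in F -> [set a; r; s] \in F ->
  [set b; p; r] \in F -> [set b; q; s] \in F -> [set c; q; r] \in F ->
  [set c; p; s] \in F -> fam_iso F fano.
Proof.
move=> H1 H2 H3 H4 H5 H6 H7.
move: (set3_neq H1) (set3_neq H2) (set3_neq H3) (set3_neq H4) (set3_neq H5)
  (set3_neq H6) (set3_neq H7) => D1 D2 D3 D4 D5 D6 D7.
have FE : F = [set [set a; b; c]; [set a; p; q]; [set a; r; s]; [set b; p; r];
                   [set b; q; s]; [set c; q; r]; [set c; p; s]].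
  apply/setP => E; apply/idP/idP; last first.
    by rewrite !inE => /orP [/orP [/orP [/orP [/orP [/orP []|]|]|]|]|] /eqP ->.
  move=> EF; have [w [u [v [Ee wA]]]] := edge_through EF H1; subst E.
  have D0 := set3_neq EF.
  move: (meet_set3 EF H2) (meet_set3 EF H3) (meet_set3 EF H4) (meet_set3 EF H5)
        (meet_set3 EF H6) (meet_set3 EF H7) => M2 M3 M4 M5 M6 M7.
  clear EF H1 H2 H3 H4 H5 H6 H7; rewrite !inE.
  case: wA => [?|[?|?]]; subst w;
    case_eq_among u (a, (b, (c, (p, (q, (r, (s, tt)))))));
    case_eq_among v (a, (b, (c, (p, (q, (r, (s, tt)))))));
    cases_then ltac:(mem_set3_list).
exists (fun i : 'I_7 => nth a [:: a; b; c; p; q; r; s] i); split.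
  apply: nth_ord_inj => //=; rewrite !inE; clear -D1 D2 D3 D4 D5 D6 D7; by rewrite_neqs.
rewrite FE /fam_image /fano.
by rewrite !imsetU ?imsetU1 !imset_set1 /tri /= !imsetU ?imsetU1 !imset_set1 !inordK.
Qed.

Lemma T0_of_edges a b c p q r :
  [set a; b; c] \in F -> [set a; b; r] \in F -> [set c; r; q] \in F ->
  [set c; r; p] \in F -> [set a; q; p] \in F -> [set b; q; p] \in F ->
  [set a; c; q] \in F -> [set b; r; q] \in F -> [set a; r; p] \in F ->
  [set b; c; p] \in F -> fam_iso F T0.
Proof.
move=> H1 H2 H3 H4 H5 H6 H7 H8 H9 H10.
move: (set3_neq H1) (set3_neq H2) (set3_neq H3) (set3_neq H4) (set3_neq H5)
  (set3_neq H6) (set3_neq H7) (set3_neq H8) (set3_neq H9) (set3_neq H10)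
  => D1 D2 D3 D4 D5 D6 D7 D8 D9 D10.
have FE : F = [set [set a; b; c]; [set a; b; r]; [set c; r; q]; [set c; r; p]; [set a; q; p];
   [set b; q; p]; [set a; c; q]; [set b; r; q]; [set a; r; p]; [set b; c; p]].
  apply/setP => E; apply/idP/idP; last first.
    by rewrite !inE => H; repeat (case/orP: H => H); move/eqP: H => ->.
  move=> EF; have [w [u [v [Ee wA]]]] := edge_through EF H1; subst E.
  have D0 := set3_neq EF.
  move: (meet_set3 EF H2) (meet_set3 EF H3) (meet_set3 EF H4) (meet_set3 EF H5)
        (meet_set3 EF H6) (meet_set3 EF H7) (meet_set3 EF H8) (meet_set3 EF H9)
        (meet_set3 EF H10) => M2 M3 M4 M5 M6 M7 M8 M9 M10.
  clear EF H1 H2 H3 H4 H5 H6 H7 H8 H9 H10; rewrite !inE.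
  case: wA => [?|[?|?]]; subst w;
    case_eq_among u (a, (b, (c, (p, (q, (r, tt))))));
    case_eq_among v (a, (b, (c, (p, (q, (r, tt))))));
    cases_then ltac:(mem_set3_list).
exists (fun i : 'I_6 => nth a [:: a; b; c; r; q; p] i); split.
  apply: nth_ord_inj => //=; rewrite !inE; clear -D1 D2 D3 D4 D5 D6 D7 D8 D9 D10; by rewrite_neqs.
rewrite FE /fam_image /T0.
by rewrite !imsetU ?imsetU1 !imset_set1 /tri /= !imsetU ?imsetU1 !imset_set1 !inordK.
Qed.

Lemma two_avoiders E y z : E \in F -> y \in E -> z \in E -> y <> z ->
  exists X Y, [/\ X \in F, Y \in F, X <> Y &
                  [/\ y \notin X, z \notin X, y \notin Y & z \notin Y]].
Proof.
move=> EF yE zE yz.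
have S2 : #|[set y; z]| = 2 by rewrite cards2; case: eqP.
have SE : [set y; z] \subset E by apply/subsetP => w; rewrite !inE => /orP [] /eqP ->.
have /card_gt1P [X [Y [XA YA XY]]] := Favoid EF SE S2.
move: XA YA; rewrite !inE => /andP [XF dX] /andP [YF dY].
exists X, Y; split => //; first by move=> E'; subst; rewrite eqxx in XY.
have y2 : y \in [set y; z] by rewrite !inE eqxx.
have z2 : z \in [set y; z] by rewrite !inE eqxx orbT.
by rewrite !(disjointFl dX) ?(disjointFl dY).
Qed.

Lemma avoider_neq (B : {set T}) E y z : E \in F -> y \in E -> z \in E -> y <> z ->
  exists X, [/\ X \in F, y \notin X, z \notin X & X <> B].
Proof.
move=> EF yE zE yz; have [X [Y [XF YF XY [yX zX yY zY]]]] := two_avoiders EF yE zE yz.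
case: (X =P B) => [XB|]; last by exists X.
by exists Y; split => // YB; apply: XY; rewrite XB YB.
Qed.

Lemma avoider_through x y z (X : {set T}) : [set x; y; z] \in F -> X \in F ->
  y \notin X -> z \notin X -> exists u v, X = [set x; u; v].
Proof.
move=> AF XF yX zX; apply: card3_set3; first exact: F3.
have /set0Pn [w] := Fint XF AF; rewrite inE => /andP [wX /in_set3P].
by case=> [E|[E|E]]; subst w => //; [rewrite wX in yX | rewrite wX in zX].
Qed.

(* The clause [~ (u1 = u2 /\ v1 = v2 \/ u1 = v2 /\ v1 = u2)] records that the
   two edges differ, in the form the case analyses consume. *)
Lemma two_edges_through x y z : [set x; y; z] \in F -> exists u1 v1 u2 v2,
  [/\ [set x; u1; v1] \in F, [set x; u2; v2] \in F,
      [/\ u1 <> y, u1 <> z, v1 <> y & v1 <> z],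
      [/\ u2 <> y, u2 <> z, v2 <> y & v2 <> z] &
      ~ ((u1 = u2 /\ v1 = v2) \/ (u1 = v2 /\ v1 = u2)) /\
      [set x; u1; v1] <> [set x; u2; v2]].
Proof.
move=> AF; have [xy [xz yz]] := set3_neq AF.
have yA : y \in [set x; y; z] by apply/in_set3P; auto.
have zA : z \in [set x; y; z] by apply/in_set3P; auto.
have [X [Y [XF YF XY [yX zX yY zY]]]] := two_avoiders AF yA zA yz.
have [u1 [v1 Xe]] := avoider_through AF XF yX zX.
have [u2 [v2 Ye]] := avoider_through AF YF yY zY.
subst X Y; exists u1, v1, u2, v2; split => //.
- by move: (notin_set3 yX) (notin_set3 zX) => [? [? ?]] [? [? ?]]; split=> E; subst; auto.
- by move: (notin_set3 yY) (notin_set3 zY) => [? [? ?]] [? [? ?]]; split=> E; subst; auto.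
- split => // - [[E1 E2]|[E1 E2]]; subst; apply: XY => //; exact: set3C23.
Qed.

Lemma no_shared_pair a b c p q r s x y :
  [set a; b; c] \in F -> [set a; p; q] \in F -> [set a; r; s] \in F ->
  [set b; x; y] \in F -> [set c; x; y] \in F ->
  p <> r -> p <> s -> q <> r -> q <> s ->
  b <> p -> b <> q -> b <> r -> b <> s -> c <> p -> c <> q -> c <> r -> c <> s -> False.
Proof.
move=> H1 H2 H3 H4 H5 pr ps qr qs bp bq br bs cp cq cr cs.
have [_ [_ xy]] := set3_neq H4.
have xE : x \in [set b; x; y] by apply/in_set3P; auto.
have yE : y \in [set b; x; y] by apply/in_set3P; auto.
have [X [XF xX yX XA]] := avoider_neq [set a; b; c] H4 xE yE xy.
have [w [u [v [Xe wA]]]] := edge_through XF H4; subst X.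
move: (notin_set3 xX) (notin_set3 yX) (set3_neq XF) (set3_neq H1) (set3_neq H2)
  (set3_neq H3) (set3_neq H4) (set3_neq H5)
  (meet_set3 XF H1) (meet_set3 XF H2) (meet_set3 XF H3) (meet_set3 XF H5).
clear -XA wA pr ps qr qs bp bq br bs cp cq cr cs => *.
by cases_then contra_set3_neq.
Qed.

Lemma transversal_through a b c p q r s u v :
  [set b; u; v] \in F -> [set a; p; q] \in F -> [set a; r; s] \in F ->
  u <> a -> u <> c -> v <> a -> v <> c -> b <> a -> b <> p -> b <> q -> b <> r -> b <> s ->
  p <> r -> p <> s -> q <> r -> q <> s ->
  exists i j, [/\ [set b; i; j] \in F, i = p \/ i = q, j = r \/ j = s &
                  [set b; u; v] = [set b; i; j]].
Proof.
move=> Hb H2 H3 *.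
have : ((u = p \/ u = q) /\ (v = r \/ v = s)) \/ ((v = p \/ v = q) /\ (u = r \/ u = s)).
  move: (set3_neq Hb) (meet_set3 Hb H2) (meet_set3 Hb H3); clear Hb H2 H3 => *.
  by cases_then ltac:(intuition).
case=> [[up vr]|[vp ur]]; first by exists u, v.
by exists v, u; rewrite set3C23; split.
Qed.

Lemma fano_of_disjoint_stars a b c p q r s :
  [set a; b; c] \in F -> [set a; p; q] \in F -> [set a; r; s] \in F ->
  b <> p -> b <> q -> b <> r -> b <> s -> c <> p -> c <> q -> c <> r -> c <> s ->
  p <> r -> p <> s -> q <> r -> q <> s -> fam_iso F fano.
Proof.
move=> H1 H2 H3 bp bq br bs cp cq cr cs pr ps qr qs.
have [ab [ac bc]] := set3_neq H1.
have H1b : [set b; a; c] \in F by rewrite -set3C12.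
have H1c : [set c; b; a] \in F by rewrite -set3C13.
have [u1 [v1 [u2 [v2 [Hb1 Hb2 [? ? ? ?] [? ? ? ?] [_ Nb]]]]]] := two_edges_through H1b.
have [u3 [v3 [u4 [v4 [Hc1 Hc2 [? ? ? ?] [? ? ? ?] [_ Nc]]]]]] := two_edges_through H1c.
have tb u v : [set b; u; v] \in F -> u <> a -> u <> c -> v <> a -> v <> c -> _ :=
  fun Hb ua uc va vc => transversal_through Hb H2 H3 ua uc va vc (not_eq_sym ab)
    bp bq br bs pr ps qr qs.
have tc u v : [set c; u; v] \in F -> u <> a -> u <> b -> v <> a -> v <> b -> _ :=
  fun Hc ua ub va vb => transversal_through Hc H2 H3 ua ub va vb (not_eq_sym ac)
    cp cq cr cs pr ps qr qs.
have [i1 [j1 [Hb1' o1 o2 e1]]] := tb _ _ Hb1 ltac:(done) ltac:(done) ltac:(done) ltac:(done).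
have [i2 [j2 [Hb2' o3 o4 e2]]] := tb _ _ Hb2 ltac:(done) ltac:(done) ltac:(done) ltac:(done).
have [i3 [j3 [Hc1' o5 o6 e3]]] := tc _ _ Hc1 ltac:(done) ltac:(done) ltac:(done) ltac:(done).
have [i4 [j4 [Hc2' o7 o8 e4]]] := tc _ _ Hc2 ltac:(done) ltac:(done) ltac:(done) ltac:(done).
rewrite e1 e2 in Nb; rewrite e3 e4 in Nc.
have H3' : [set a; s; r] \in F by rewrite -set3C23.
clear tb tc Hb1 Hb2 Hc1 Hc2 e1 e2 e3 e4.
have no_share := fun X Y => no_shared_pair H1 H2 H3 X Y pr ps qr qs bp bq br bs cp cq cr cs.
have M1 := meet_set3 Hb1' Hc1'; have M2 := meet_set3 Hb1' Hc2'.
have M3 := meet_set3 Hb2' Hc1'; have M4 := meet_set3 Hb2' Hc2'.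
case: o1 => ?; subst i1; case: o2 => ?; subst j1; case: o3 => ?; subst i2;
case: o4 => ?; subst j2; case: o5 => ?; subst i3; case: o6 => ?; subst j3;
case: o7 => ?; subst i4; case: o8 => ?; subst j4;
  cases_then ltac:(first [
      exfalso; first [ exact: (no_share _ _ Hb1' Hc1') | exact: (no_share _ _ Hb1' Hc2')
                     | exact: (no_share _ _ Hb2' Hc1') | exact: (no_share _ _ Hb2' Hc2')]
    | first [ exact: (fano_of_edges H1 H2 H3 Hb1' Hb2' Hc1' Hc2')
            | exact: (fano_of_edges H1 H2 H3 Hb1' Hb2' Hc2' Hc1')
            | exact: (fano_of_edges H1 H2 H3 Hb2' Hb1' Hc1' Hc2')
            | exact: (fano_of_edges H1 H2 H3 Hb2' Hb1' Hc2' Hc1')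
            | exact: (fano_of_edges H1 H2 H3' Hb1' Hb2' Hc1' Hc2')
            | exact: (fano_of_edges H1 H2 H3' Hb1' Hb2' Hc2' Hc1')
            | exact: (fano_of_edges H1 H2 H3' Hb2' Hb1' Hc1' Hc2')
            | exact: (fano_of_edges H1 H2 H3' Hb2' Hb1' Hc2' Hc1')] ]).
Qed.

Definition linked x y z := forall u1 v1 u2 v2,
  [set x; u1; v1] \in F -> [set x; u2; v2] \in F ->
  u1 <> y -> u1 <> z -> v1 <> y -> v1 <> z -> u2 <> y -> u2 <> z -> v2 <> y -> v2 <> z ->
  u1 = u2 \/ u1 = v2 \/ v1 = u2 \/ v1 = v2.

Lemma fano_of_not_linked a b c : [set a; b; c] \in F -> ~ linked a b c -> fam_iso F fano.
Proof.
move=> H1 Nl; apply: NNPP => Nfano; apply: Nl => u1 v1 u2 v2 Ha1 Ha2 *.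
apply: NNPP => Hd; apply: Nfano.
by apply: (fano_of_disjoint_stars H1 Ha1 Ha2); try solve_neq; move=> E; subst; tauto.
Qed.

Lemma linked_swap x y z : linked x y z -> linked x z y.
Proof. by move=> L u1 v1 u2 v2 H1 H2 *; apply: (L u1 v1 u2 v2). Qed.

Lemma linked_meet x y z u1 v1 u2 v2 : linked x y z ->
  [set x; u1; v1] \in F -> [set x; u2; v2] \in F ->
  u2 <> y -> u2 <> z -> v2 <> y -> v2 <> z ->
  u1 = y \/ u1 = z \/ v1 = y \/ v1 = z \/ u1 = u2 \/ u1 = v2 \/ v1 = u2 \/ v1 = v2.
Proof.
move=> L H1 H2 *.
case: (u1 =P y); first tauto; case: (u1 =P z); first tauto.
case: (v1 =P y); first tauto; case: (v1 =P z); first tauto.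
by move=> *; have := L u1 v1 u2 v2 H1 H2; tauto.
Qed.

Lemma linked_completion a b c p q r :
  [set a; b; c] \in F -> [set a; p; q] \in F -> [set a; p; r] \in F -> [set b; q; r] \in F ->
  q <> r -> b <> p -> b <> q -> b <> r -> c <> p -> c <> q -> c <> r ->
  linked a b c -> linked b a c ->
  ([set a; b; r] \in F /\ [set c; p; r] \in F /\ [set c; q; r] \in F) \/
  ([set a; c; r] \in F /\ [set b; p; r] \in F /\ [set b; q; r] \in F).
Proof.
move=> H1 H2 H3 H4 qr bp bq br cp cq cr La Lb.
have [ab [ac bc]] := set3_neq H1.
have [ap [aq pq]] := set3_neq H2.
have [_ [ar pr]] := set3_neq H3.
have H1b : [set b; a; c] \in F by rewrite -set3C12.
have H1c : [set c; b; a] \in F by rewrite -set3C13.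
have [u1 [v1 [u2 [v2 [Hb1 Hb2 [? ? ? ?] [? ? ? ?] [_ NB]]]]]] := two_edges_through H1b.
have [u3 [v3 [u4 [v4 [Hc1 Hc2 [? ? ? ?] [? ? ? ?] [_ NC]]]]]] := two_edges_through H1c.
have nb u v : [set b; u; v] \in F -> u <> a -> u <> c -> v <> a -> v <> c ->
    exists i j, [set b; u; v] = [set b; i; j] /\
                ((i = p /\ j = q) \/ (i = p /\ j = r) \/ (i = q /\ j = r)).
  move=> Hb ua uc va vc; have [_ [_ uv]] := set3_neq Hb.
  apply: pair_meeting_three_pairs => //.
  - by apply: (meet_tail Hb H2); solve_neq.
  - by apply: (meet_tail Hb H3); solve_neq.
  - by apply: (Lb u v q r) => //; solve_neq.
have nc u v : [set c; u; v] \in F -> u <> a -> u <> b -> v <> a -> v <> b ->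
    exists i j, [set c; u; v] = [set c; i; j] /\
                ((i = p /\ j = q) \/ (i = p /\ j = r) \/ (i = q /\ j = r)).
  move=> Hc ua ub va vb; have [_ [_ uv]] := set3_neq Hc.
  apply: pair_meeting_three_pairs => //.
  - by apply: (meet_tail Hc H2); solve_neq.
  - by apply: (meet_tail Hc H3); solve_neq.
  - by apply: (meet_tail Hc H4); solve_neq.
have [i1 [j1 [e1 o1]]] := nb u1 v1 Hb1 ltac:(done) ltac:(done) ltac:(done) ltac:(done).
have [i2 [j2 [e2 o2]]] := nb u2 v2 Hb2 ltac:(done) ltac:(done) ltac:(done) ltac:(done).
have [i3 [j3 [e3 o3]]] := nc u3 v3 Hc1 ltac:(done) ltac:(done) ltac:(done) ltac:(done).
have [i4 [j4 [e4 o4]]] := nc u4 v4 Hc2 ltac:(done) ltac:(done) ltac:(done) ltac:(done).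
rewrite e1 in Hb1 NB; rewrite e2 in Hb2 NB; rewrite e3 in Hc1 NC; rewrite e4 in Hc2 NC.
clear e1 e2 e3 e4 nb nc.
have pE : p \in [set a; p; q] by apply/in_set3P; auto.
have qE : q \in [set a; p; q] by apply/in_set3P; auto.
have [X [XF pX qX XA]] := avoider_neq [set a; b; c] H2 pE qE pq.
have [w [u [v [Xe wA]]]] := edge_through XF H2; subst X.
have wa : w = a.
  by case: wA => [//|[E|E]]; subst; [move: pX | move: qX]; rewrite !inE eqxx.
subst w.
have LM := linked_meet La XF H2 (not_eq_sym bp) (not_eq_sym cp) (not_eq_sym bq) (not_eq_sym cq).
move: (notin_set3 pX) (notin_set3 qX) (set3_neq XF) (meet_set3 XF Hb1) (meet_set3 XF Hb2)
  (meet_set3 XF Hc1) (meet_set3 XF Hc2) => *.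
clear pX qX pE qE La Lb H1b H1c H3 H4.
clear dependent u1; clear dependent v1; clear dependent u2; clear dependent v2.
clear dependent u3; clear dependent v3; clear dependent u4; clear dependent v4.
clear Favoid Fint F3.
case_eq_among u (b, (c, (p, (q, (r, tt))))); case_eq_among v (b, (c, (p, (q, (r, tt)))));
  subst_eqs;
  case: o1 => [[? ?]|[[? ?]|[? ?]]]; subst i1 j1; case: o2 => [[? ?]|[[? ?]|[? ?]]]; subst i2 j2;
  subst_eqs;
  case: o3 => [[? ?]|[[? ?]|[? ?]]]; subst i3 j3; case: o4 => [[? ?]|[[? ?]|[? ?]]]; subst i4 j4;
  subst_eqs;
  cases_then ltac:(first [ left; split; [|split]; set3_in_F
                         | right; split; [|split]; set3_in_F | contra_set3_neq ]).
Qed.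

Lemma T0_of_nine_edges a b c p q r :
  [set a; b; c] \in F -> [set a; p; q] \in F -> [set a; p; r] \in F -> [set b; q; r] \in F ->
  [set a; b; r] \in F -> [set c; p; r] \in F -> [set c; q; r] \in F -> [set a; c; q] \in F ->
  [set b; p; q] \in F -> fam_iso F T0.
Proof.
move=> H1 H2 H3 H4 H5 H6 H7 H8 H9.
have [_ [_ qr]] := set3_neq H4.
have qE : q \in [set b; q; r] by apply/in_set3P; auto.
have rE : r \in [set b; q; r] by apply/in_set3P; auto.
have [X [XF qX rX XA]] := avoider_neq [set a; b; c] H4 qE rE qr.
have [w [u [v [Xe wA]]]] := edge_through XF H4; subst X.
have wb : w = b.
  by case: wA => [//|[E|E]]; subst; [move: qX | move: rX]; rewrite !inE eqxx.
subst w.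
have H10 : [set b; c; p] \in F.
  move: (notin_set3 qX) (notin_set3 rX) (set3_neq XF) (set3_neq H1) (set3_neq H2)
   (set3_neq H3) (set3_neq H4) (set3_neq H5) (set3_neq H6) (set3_neq H7) (set3_neq H8)
   (set3_neq H9) (meet_set3 XF H2) (meet_set3 XF H3) (meet_set3 XF H5) (meet_set3 XF H6)
   (meet_set3 XF H7) (meet_set3 XF H8) (meet_set3 XF H9) => *.
  clear qX rX qE rE.
  by cases_then ltac:(first [set3_in_F | contra_set3_neq]).
by apply: (T0_of_edges (a := a) (b := b) (c := c) (p := p) (q := q) (r := r)); set3_in_F.
Qed.

Lemma T0_of_star_and_bqr a b c p q r :
  [set a; b; c] \in F -> [set a; p; q] \in F -> [set a; p; r] \in F -> [set b; q; r] \in F ->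
  q <> r -> b <> p -> b <> q -> b <> r -> c <> p -> c <> q -> c <> r ->
  linked a b c -> linked b a c -> fam_iso F T0.
Proof.
move=> H1 H2 H3 H4 qr bp bq br cp cq cr La Lb.
have H4' : [set b; r; q] \in F by rewrite -set3C23.
have R1 := linked_completion H1 H2 H3 H4 qr bp bq br cp cq cr La Lb.
have R2 := linked_completion H1 H3 H2 H4' (not_eq_sym qr) bp br bq cp cr cq La Lb.
have [ab [ac bc]] := set3_neq H1.
have [ap [aq pq]] := set3_neq H2.
have [_ [ar pr]] := set3_neq H3.
case: R1 => [[G1 [G2 G3]]|[G1 [G2 G3]]]; case: R2 => [[K1 [K2 K3]]|[K1 [K2 K3]]].
- by exfalso; move: (meet_set3 G1 K2) => *; cases_then idtac.
- exact: (T0_of_nine_edges H1 H2 H3 H4 G1 G2 G3 K1 K2).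
- by apply: (T0_of_nine_edges (a := a) (b := b) (c := c) (p := p) (q := r) (r := q)); set3_in_F.
- by exfalso; move: (meet_set3 G1 K2) => *; cases_then idtac.
Qed.

Lemma p_or_qr x p q r u v : [set x; u; v] \in F ->
  u = p \/ u = q \/ v = p \/ v = q -> u = p \/ u = r \/ v = p \/ v = r -> q <> r ->
  (exists s, [set x; u; v] = [set x; p; s]) \/ [set x; u; v] = [set x; q; r].
Proof.
move=> H M1 M2 qr; have [_ [_ uv]] := set3_neq H.
case: (u =P p) => [->|up]; first by left; exists v.
case: (v =P p) => [->|vp]; first by left; exists u; rewrite set3C23.
right; case: M1 => [//|[E1|[//|E1]]]; case: M2 => [//|[E2|[//|E2]]]; subst => //.
exact: set3C23.
Qed.

Lemma no_two_p_stars a b c p q s1 s2 t1 t2 :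
  [set a; b; c] \in F -> [set a; p; q] \in F ->
  [set b; p; s1] \in F -> [set b; p; s2] \in F -> s1 <> s2 ->
  [set c; p; t1] \in F -> [set c; p; t2] \in F -> t1 <> t2 ->
  p <> b -> p <> c -> q <> b -> q <> c -> linked a b c ->
  s1 <> a -> s2 <> a -> t1 <> a -> t2 <> a -> s1 <> c -> s2 <> c -> t1 <> b -> t2 <> b -> False.
Proof.
move=> H1 H2 B1 B2 s12 C1 C2 t12 pb pc qb qc La sa1 sa2 ta1 ta2 sc1 sc2 tb1 tb2.
have [_ [_ pq]] := set3_neq H2.
have pE : p \in [set a; p; q] by apply/in_set3P; auto.
have qE : q \in [set a; p; q] by apply/in_set3P; auto.
have [X [XF pX qX XA]] := avoider_neq [set a; b; c] H2 pE qE pq.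
have [w [u [v [Xe wA]]]] := edge_through XF H2; subst X.
have wa : w = a.
  by case: wA => [//|[E|E]]; subst; [move: pX | move: qX]; rewrite !inE eqxx.
subst w.
have LM := linked_meet La XF H2 pb pc qb qc.
move: (notin_set3 pX) (notin_set3 qX) (set3_neq XF) (set3_neq H1) (set3_neq B1)
  (set3_neq B2) (set3_neq C1) (set3_neq C2)
  (meet_set3 XF B1) (meet_set3 XF B2) (meet_set3 XF C1) (meet_set3 XF C2) => *.
clear pX qX pE qE La.
by cases_then contra_set3_neq.
Qed.

Lemma linked_star a b c : [set a; b; c] \in F -> linked a b c -> exists p q r,
  [/\ [set a; p; q] \in F, [set a; p; r] \in F, q <> r &
   (p <> b /\ p <> c) /\ (q <> b /\ q <> c) /\ (r <> b /\ r <> c)].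
Proof.
move=> H1 La.
have [ab [ac bc]] := set3_neq H1.
have [u1 [v1 [u2 [v2 [Ha1 Ha2 [? ? ? ?] [? ? ? ?] [NP _]]]]]] := two_edges_through H1.
have LM := La u1 v1 u2 v2 Ha1 Ha2 ltac:(done) ltac:(done) ltac:(done) ltac:(done)
   ltac:(done) ltac:(done) ltac:(done) ltac:(done).
case: LM => [E|[E|[E|E]]].
- rewrite -E in Ha2; exists u1, v1, v2; split => //;
    try (by move=> E'; apply: NP; left; split); repeat split; solve_neq.
- rewrite -E set3C23 in Ha2; exists u1, v1, u2; split => //;
    try (by move=> E'; apply: NP; right; split); repeat split; solve_neq.
- rewrite -E in Ha2; rewrite set3C23 in Ha1; exists v1, u1, v2; split => //;
    try (by move=> E'; apply: NP; right; split); repeat split; solve_neq.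
- rewrite -E set3C23 in Ha2; rewrite set3C23 in Ha1; exists v1, u1, u2; split => //;
    try (by move=> E'; apply: NP; left; split); repeat split; solve_neq.
Qed.

Lemma T0_of_linked a b c :
  [set a; b; c] \in F -> linked a b c -> linked b a c -> linked c a b -> fam_iso F T0.
Proof.
move=> H1 La Lb Lc.
have [ab [ac bc]] := set3_neq H1.
have [p [q [r [H2 H3 qr [[pb pc] [[qb qc] [rb rc]]]]]]] := linked_star H1 La.
have [ap [aq pq]] := set3_neq H2.
have [_ [ar pr]] := set3_neq H3.
have H1b : [set b; a; c] \in F by rewrite -set3C12.
have H1c : [set c; b; a] \in F by rewrite -set3C13.
have [u1 [v1 [u2 [v2 [Hb1 Hb2 [? ? ? ?] [? ? ? ?] [_ NB]]]]]] := two_edges_through H1b.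
have [u3 [v3 [u4 [v4 [Hc1 Hc2 [? ? ? ?] [? ? ? ?] [_ NC]]]]]] := two_edges_through H1c.
have fb u v : [set b; u; v] \in F -> u <> a -> v <> a ->
    (exists s, [set b; u; v] = [set b; p; s]) \/ [set b; u; v] = [set b; q; r].
  move=> Hb ua va; apply: p_or_qr => //.
  - by apply: (meet_tail Hb H2); solve_neq.
  - by apply: (meet_tail Hb H3); solve_neq.
have fc u v : [set c; u; v] \in F -> u <> a -> v <> a ->
    (exists s, [set c; u; v] = [set c; p; s]) \/ [set c; u; v] = [set c; q; r].
  move=> Hc ua va; apply: p_or_qr => //.
  - by apply: (meet_tail Hc H2); solve_neq.
  - by apply: (meet_tail Hc H3); solve_neq.
have T0b : [set b; q; r] \in F -> fam_iso F T0.
  by move=> H4; apply: (T0_of_star_and_bqr H1 H2 H3 H4) => //; solve_neq.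
have T0c : [set c; q; r] \in F -> fam_iso F T0.
  move=> H4; have H1' : [set a; c; b] \in F by rewrite -set3C23.
  by apply: (T0_of_star_and_bqr H1' H2 H3 H4) => //; try solve_neq; apply: linked_swap.
case: (fb u1 v1 Hb1 ltac:(done) ltac:(done)) => [[s1 e1]|e1]; last by apply: T0b; rewrite -e1.
case: (fb u2 v2 Hb2 ltac:(done) ltac:(done)) => [[s2 e2]|e2]; last by apply: T0b; rewrite -e2.
case: (fc u3 v3 Hc1 ltac:(done) ltac:(done)) => [[t1 e3]|e3]; last by apply: T0c; rewrite -e3.
case: (fc u4 v4 Hc2 ltac:(done) ltac:(done)) => [[t2 e4]|e4]; last by apply: T0c; rewrite -e4.
rewrite e1 in Hb1 NB; rewrite e2 in Hb2 NB; rewrite e3 in Hc1 NC; rewrite e4 in Hc2 NC.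
have := set3_eq_mem e1; have := set3_eq_mem e2; have := set3_eq_mem e3; have := set3_eq_mem e4.
move=> i4 i3 i2 i1.
exfalso; apply: (no_two_p_stars H1 H2 Hb1 Hb2 _ Hc1 Hc2 _ pb pc qb qc La).
all: try (by move=> E; subst).
all: have := set3_neq Hb1; have := set3_neq Hb2; have := set3_neq Hc1; have := set3_neq Hc2.
all: move=> *; subst_eqs; move=> E; subst; cases_then fail.
Qed.

Lemma fano_or_T0 : F != set0 -> fam_iso F fano \/ fam_iso F T0.
Proof.
case/set0Pn => A AF.
have /card_gt0P [x xA] : 0 < #|A| by rewrite F3.
have [y [z Ae]] := card3_set3 (F3 AF) xA; subst A.
have AF' : [set y; x; z] \in F by rewrite -set3C12.
have AF'' : [set z; x; y] \in F by rewrite -set3C13 -set3C12.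
case: (classic (linked x y z)) => Lx; last by left; apply: (fano_of_not_linked AF).
case: (classic (linked y x z)) => Ly; last by left; apply: (fano_of_not_linked AF').
case: (classic (linked z x y)) => Lz; last by left; apply: (fano_of_not_linked AF'').
by right; apply: (T0_of_linked AF).
Qed.

End Family.

Theorem lemma3p1 (n : nat) (F : {set {set 'I_n}}) :
  F != set0 ->
  (forall A, A \in F -> #|A| = 3) ->
  intersecting F ->
  fam_iso F fano \/ fam_iso F T0 \/
  exists A S : {set 'I_n}, [/\ A \in F, S \subset A, #|S| = 2 & #|avoid F S| <= 1].
Proof.
move=> Fne F3 Fint.
case: (classic (exists A S : {set 'I_n},
  [/\ A \in F, S \subset A, #|S| = 2 & #|avoid F S| <= 1])) => [small|no_small].
  by right; right.
have Favoid (A S : {set 'I_n}) : A \in F -> S \subset A -> #|S| = 2 -> 1 < #|avoid F S|.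
  by move=> AF SA S2; rewrite ltnNge; apply/negP => small; apply: no_small; exists A, S.
by case: (fano_or_T0 F3 Fint Favoid Fne) => H; [left | right; left].
Qed.
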